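(* Let $F\colon\mathbb{A}\to\mathbb{B}$ be a double functor satisfying the following three conditions. (hb3) For every square $\beta\colon(e_{FA}\,{}^{Fa}_{Fc}\,e_{FC})$ in $\mathbb{B}$ there is a unique square $\alpha\colon(e_A\,{}^{a}_{c}\,e_C)$ in $\mathbb{A}$ with $F\alpha=\beta$. (vb2) For every square $\beta\colon(Fu\,{}^{b}_{d}\,Fu')$ in $\mathbb{B}$, with $u\colon A\to A'$, $u'\colon C\to C'$ vertical in $\mathbb{A}$, there exist a square $\alpha\colon(u\,{}^{a}_{c}\,u')$ in $\mathbb{A}$ and vertically invertible squares $\psi_0\colon(e_{FA}\,{}^{b}_{Fa}\,e_{FC})$ and $\psi_1\colon(e_{FA'}\,{}^{d}_{Fc}\,e_{FC'})$ in $\mathbb{B}$ such that the vertical composite of $\psi_0$ on top of $F\alpha$ equals the vertical composite of $\beta$ on top of $\psi_1$. (vb3) For all squares $\alpha\colon(u\,{}^{a}_{c}\,u')$ and $\alpha'\colon(u\,{}^{a'}_{c'}\,u')$ in $\mathbb{A}$ and squares $\tau_0\colon(e_{FA}\,{}^{Fa}_{Fa'}\,e_{FC})$, $\tau_1\colon(e_{FA'}\,{}^{Fc}_{Fc'}\,e_{FC'})$ in $\mathbb{B}$ such that $\tau_0$ on top of $F\alpha'$ equals $F\alpha$ on top of $\tau_1$, there exist unique squares $\sigma_0\colon(e_A\,{}^{a}_{a'}\,e_C)$, $\sigma_1\colon(e_{A'}\,{}^{c}_{c'}\,e_{C'})$ in $\mathbb{A}$ with $F\sigma_0=\tau_0$,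 $F\sigma_1=\tau_1$, and $\sigma_0$ on top of $\alpha'$ equal to $\alpha$ on top of $\sigma_1$. Then for every square $\beta\colon(Fu\,{}^{Fa}_{Fc}\,Fu')$ in $\mathbb{B}$ there exists a unique square $\alpha\colon(u\,{}^{a}_{c}\,u')$ in $\mathbb{A}$ such that $F\alpha=\beta$.
   Context: A double category has objects, horizontal morphisms, vertical morphisms and squares; $\alpha\colon(u\,{}^{a}_{b}\,v)$ denotes a square with top horizontal boundary $a$, bottom horizontal boundary $b$, left vertical boundary $u$ and right vertical boundary $v$. Horizontal and vertical composition of squares are strictly associative and unital and satisfy interchange; $e_A$ is the vertical identity morphism on $A$. A square is vertically invertible if it has an inverse for vertical composition. Double functors preserve all structure strictly. *)

(* Objects, horizontal morphisms, vertical morphisms and squares are each a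
   single type, with boundary functions.  Compositions are total functions;
   all axioms are only imposed on composable pairs (values on non-composable
   pairs are irrelevant junk).  Composition is written in diagrammatic order:
   hcomp a b = "a then b", vcomp u v = "u then v",
   sq_vcomp s t = "s on top of t", sq_hcomp s t = "s to the left of t".
   A square s : (u ^a_b v) has top s = a, bot s = b, lft s = u, rgt s = v. *)

Record DoubleCat := {
  Ob : Type;
  HM : Type;  hs : HM -> Ob;  ht : HM -> Ob;
  VM : Type;  vs : VM -> Ob;  vt : VM -> Ob;
  Sq : Type;
  top : Sq -> HM;  bot : Sq -> HM;  lft : Sq -> VM;  rgt : Sq -> VM;

  hid : Ob -> HM;
  hcomp : HM -> HM -> HM;
  hid_src : forall A, hs (hid A) = A;
  hid_tgt : forall A, ht (hid A) = A;
  hcomp_src : forall a b, ht a = hs b -> hs (hcomp a b) = hs a;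
  hcomp_tgt : forall a b, ht a = hs b -> ht (hcomp a b) = ht b;
  hcomp_idl : forall a, hcomp (hid (hs a)) a = a;
  hcomp_idr : forall a, hcomp a (hid (ht a)) = a;
  hcomp_assoc : forall a b c, ht a = hs b -> ht b = hs c ->
    hcomp (hcomp a b) c = hcomp a (hcomp b c);

  vid : Ob -> VM;
  vcomp : VM -> VM -> VM;
  vid_src : forall A, vs (vid A) = A;
  vid_tgt : forall A, vt (vid A) = A;
  vcomp_src : forall u v, vt u = vs v -> vs (vcomp u v) = vs u;
  vcomp_tgt : forall u v, vt u = vs v -> vt (vcomp u v) = vt v;
  vcomp_idl : forall u, vcomp (vid (vs u)) u = u;
  vcomp_idr : forall u, vcomp u (vid (vt u)) = u;
  vcomp_assoc : forall u v w, vt u = vs v -> vt v = vs w ->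
    vcomp (vcomp u v) w = vcomp u (vcomp v w);

  sq_corner_tl : forall s, hs (top s) = vs (lft s);
  sq_corner_tr : forall s, ht (top s) = vs (rgt s);
  sq_corner_bl : forall s, hs (bot s) = vt (lft s);
  sq_corner_br : forall s, ht (bot s) = vt (rgt s);

  sq_hid : VM -> Sq;
  sq_vid : HM -> Sq;
  sq_hid_top : forall u, top (sq_hid u) = hid (vs u);
  sq_hid_bot : forall u, bot (sq_hid u) = hid (vt u);
  sq_hid_lft : forall u, lft (sq_hid u) = u;
  sq_hid_rgt : forall u, rgt (sq_hid u) = u;
  sq_vid_top : forall a, top (sq_vid a) = a;
  sq_vid_bot : forall a, bot (sq_vid a) = a;
  sq_vid_lft : forall a, lft (sq_vid a) = vid (hs a);
  sq_vid_rgt : forall a, rgt (sq_vid a) = vid (ht a);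

  sq_hcomp : Sq -> Sq -> Sq;
  sq_vcomp : Sq -> Sq -> Sq;
  sq_hcomp_top : forall s t, rgt s = lft t -> top (sq_hcomp s t) = hcomp (top s) (top t);
  sq_hcomp_bot : forall s t, rgt s = lft t -> bot (sq_hcomp s t) = hcomp (bot s) (bot t);
  sq_hcomp_lft : forall s t, rgt s = lft t -> lft (sq_hcomp s t) = lft s;
  sq_hcomp_rgt : forall s t, rgt s = lft t -> rgt (sq_hcomp s t) = rgt t;
  sq_vcomp_top : forall s t, bot s = top t -> top (sq_vcomp s t) = top s;
  sq_vcomp_bot : forall s t, bot s = top t -> bot (sq_vcomp s t) = bot t;
  sq_vcomp_lft : forall s t, bot s = top t -> lft (sq_vcomp s t) = vcomp (lft s) (lft t);
  sq_vcomp_rgt : forall s t, bot s = top t -> rgt (sq_vcomp s t) = vcomp (rgt s) (rgt t);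

  sq_hcomp_idl : forall s, sq_hcomp (sq_hid (lft s)) s = s;
  sq_hcomp_idr : forall s, sq_hcomp s (sq_hid (rgt s)) = s;
  sq_vcomp_idl : forall s, sq_vcomp (sq_vid (top s)) s = s;
  sq_vcomp_idr : forall s, sq_vcomp s (sq_vid (bot s)) = s;
  sq_hcomp_assoc : forall s t r, rgt s = lft t -> rgt t = lft r ->
    sq_hcomp (sq_hcomp s t) r = sq_hcomp s (sq_hcomp t r);
  sq_vcomp_assoc : forall s t r, bot s = top t -> bot t = top r ->
    sq_vcomp (sq_vcomp s t) r = sq_vcomp s (sq_vcomp t r);

  sq_hid_vid : forall A, sq_hid (vid A) = sq_vid (hid A);
  sq_hid_vcomp : forall u v, vt u = vs v ->
    sq_hid (vcomp u v) = sq_vcomp (sq_hid u) (sq_hid v);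
  sq_vid_hcomp : forall a b, ht a = hs b ->
    sq_vid (hcomp a b) = sq_hcomp (sq_vid a) (sq_vid b);
  interchange : forall s t s' t',
    rgt s = lft t -> rgt s' = lft t' -> bot s = top s' -> bot t = top t' ->
    sq_vcomp (sq_hcomp s t) (sq_hcomp s' t') = sq_hcomp (sq_vcomp s s') (sq_vcomp t t')
}.

Arguments hs {d}. Arguments ht {d}. Arguments vs {d}. Arguments vt {d}.
Arguments top {d}. Arguments bot {d}. Arguments lft {d}. Arguments rgt {d}.
Arguments hid {d}. Arguments hcomp {d}. Arguments vid {d}. Arguments vcomp {d}.
Arguments sq_hid {d}. Arguments sq_vid {d}.
Arguments sq_hcomp {d}. Arguments sq_vcomp {d}.

Definition vert_invertible (D : DoubleCat) (s : Sq D) : Prop :=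
  exists s' : Sq D,
    bot s = top s' /\ bot s' = top s /\
    sq_vcomp s s' = sq_vid (top s) /\ sq_vcomp s' s = sq_vid (bot s).

Record DoubleFunctor (D E : DoubleCat) := {
  FO : Ob D -> Ob E;
  FH : HM D -> HM E;
  FV : VM D -> VM E;
  FS : Sq D -> Sq E;
  FH_src : forall a, hs (FH a) = FO (hs a);
  FH_tgt : forall a, ht (FH a) = FO (ht a);
  FV_src : forall u, vs (FV u) = FO (vs u);
  FV_tgt : forall u, vt (FV u) = FO (vt u);
  FS_top : forall s, top (FS s) = FH (top s);
  FS_bot : forall s, bot (FS s) = FH (bot s);
  FS_lft : forall s, lft (FS s) = FV (lft s);
  FS_rgt : forall s, rgt (FS s) = FV (rgt s);
  FH_id : forall A, FH (hid A) = hid (FO A);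
  FH_comp : forall a b, ht a = hs b -> FH (hcomp a b) = hcomp (FH a) (FH b);
  FV_id : forall A, FV (vid A) = vid (FO A);
  FV_comp : forall u v, vt u = vs v -> FV (vcomp u v) = vcomp (FV u) (FV v);
  FS_hid : forall u, FS (sq_hid u) = sq_hid (FV u);
  FS_vid : forall a, FS (sq_vid a) = sq_vid (FH a);
  FS_hcomp : forall s t, rgt s = lft t -> FS (sq_hcomp s t) = sq_hcomp (FS s) (FS t);
  FS_vcomp : forall s t, bot s = top t -> FS (sq_vcomp s t) = sq_vcomp (FS s) (FS t)
}.

Arguments FO {D E}. Arguments FH {D E}. Arguments FV {D E}. Arguments FS {D E}.

Definition has_bdry (D : DoubleCat) (s : Sq D) (u : VM D) (a c : HM D) (u' : VM D) : Prop :=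
  lft s = u /\ top s = a /\ bot s = c /\ rgt s = u'.
Arguments has_bdry {D}.

Definition hb3 (D E : DoubleCat) (F : DoubleFunctor D E) : Prop :=
  forall (a c : HM D), hs c = hs a -> ht c = ht a ->
  forall beta : Sq E,
    has_bdry beta (vid (FO F (hs a))) (FH F a) (FH F c) (vid (FO F (ht a))) ->
    exists! alpha : Sq D,
      has_bdry alpha (vid (hs a)) a c (vid (ht a)) /\ FS F alpha = beta.

Definition vb2 (D E : DoubleCat) (F : DoubleFunctor D E) : Prop :=
  forall (u u' : VM D) (beta : Sq E),
    lft beta = FV F u -> rgt beta = FV F u' ->
    exists (alpha : Sq D) (psi0 psi1 : Sq E),
      lft alpha = u /\ rgt alpha = u' /\
      vert_invertible E psi0 /\ vert_invertible E psi1 /\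
      has_bdry psi0 (vid (FO F (vs u))) (top beta) (FH F (top alpha)) (vid (FO F (vs u'))) /\
      has_bdry psi1 (vid (FO F (vt u))) (bot beta) (FH F (bot alpha)) (vid (FO F (vt u'))) /\
      sq_vcomp psi0 (FS F alpha) = sq_vcomp beta psi1.

Definition vb3 (D E : DoubleCat) (F : DoubleFunctor D E) : Prop :=
  forall (u u' : VM D) (alpha alpha' : Sq D) (tau0 tau1 : Sq E),
    lft alpha = u -> rgt alpha = u' -> lft alpha' = u -> rgt alpha' = u' ->
    has_bdry tau0 (vid (FO F (vs u))) (FH F (top alpha)) (FH F (top alpha'))
      (vid (FO F (vs u'))) ->
    has_bdry tau1 (vid (FO F (vt u))) (FH F (bot alpha)) (FH F (bot alpha'))
      (vid (FO F (vt u'))) ->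
    sq_vcomp tau0 (FS F alpha') = sq_vcomp (FS F alpha) tau1 ->
    exists! sigma : Sq D * Sq D,
      has_bdry (fst sigma) (vid (vs u)) (top alpha) (top alpha') (vid (vs u')) /\
      has_bdry (snd sigma) (vid (vt u)) (bot alpha) (bot alpha') (vid (vt u')) /\
      FS F (fst sigma) = tau0 /\ FS F (snd sigma) = tau1 /\
      sq_vcomp (fst sigma) alpha' = sq_vcomp alpha (snd sigma).


(* Uniqueness: given two lifts α1, α2 of the same square, (vb3) applied to the
   identity squares τ0 = id_{Fa}, τ1 = id_{Fc} yields globular σ0, σ1 with
   σ0;α2 = α1;σ1; by the uniqueness in (hb3) σ0 and σ1 are identities, so α1 = α2.

   Existence: (vb2) gives α0 : (u ^a0_c0 u') and invertible globular ψ0, ψ1 with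
   ψ0;Fα0 = β;ψ1.  Lifting ψ0 and ψ1⁻¹ along (hb3) to σ0, σ1, the composite
   σ0;α0;σ1 has boundary (u ^a_c u') and image ψ0;Fα0;ψ1⁻¹ = β;ψ1;ψ1⁻¹ = β. *)

Section Boundaries.
Variable D : DoubleCat.

Lemma has_bdry_corners (s : Sq D) u a c u' :
  has_bdry s u a c u' -> hs a = vs u /\ ht a = vs u' /\ hs c = vt u /\ ht c = vt u'.
Proof.
  intros (<- & <- & <- & <-).
  repeat split; auto using sq_corner_tl, sq_corner_tr, sq_corner_bl, sq_corner_br.
Qed.

Lemma has_bdry_vid (a : HM D) : has_bdry (sq_vid a) (vid (hs a)) a a (vid (ht a)).
Proof.
  unfold has_bdry; rewrite sq_vid_lft, sq_vid_top, sq_vid_bot, sq_vid_rgt; auto.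
Qed.

Lemma has_bdry_vcomp (s t : Sq D) u v a b c u2 v2 :
  has_bdry s u a b v -> has_bdry t u2 b c v2 ->
  has_bdry (sq_vcomp s t) (vcomp u u2) a c (vcomp v v2).
Proof.
  intros (Ls & Ts & Bs & Rs) (Lt & Tt & Bt & Rt).
  assert (st : bot s = top t) by congruence.
  unfold has_bdry.
  rewrite sq_vcomp_lft, sq_vcomp_top, sq_vcomp_bot, sq_vcomp_rgt by exact st.
  subst; auto.
Qed.

Lemma has_bdry_globular_top (s t : Sq D) X Y u v a b c :
  has_bdry s (vid X) a b (vid Y) -> has_bdry t u b c v -> has_bdry (sq_vcomp s t) u a c v.
Proof.
  intros Hs Ht.
  destruct (has_bdry_corners _ _ _ _ _ Hs) as (_ & _ & HX & HY).
  destruct (has_bdry_corners _ _ _ _ _ Ht) as (Hu & Hv & _ & _).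
  rewrite vid_tgt in HX, HY.
  assert (Hc := has_bdry_vcomp _ _ _ _ _ _ _ _ _ Hs Ht).
  rewrite <- HX, <- HY, Hu, Hv, !vcomp_idl in Hc; exact Hc.
Qed.

Lemma has_bdry_globular_bot (s t : Sq D) X Y u v a b c :
  has_bdry s u a b v -> has_bdry t (vid X) b c (vid Y) -> has_bdry (sq_vcomp s t) u a c v.
Proof.
  intros Hs Ht.
  destruct (has_bdry_corners _ _ _ _ _ Hs) as (_ & _ & Hu & Hv).
  destruct (has_bdry_corners _ _ _ _ _ Ht) as (HX & HY & _ & _).
  rewrite vid_src in HX, HY.
  assert (Hc := has_bdry_vcomp _ _ _ _ _ _ _ _ _ Hs Ht).
  rewrite <- HX, <- HY, Hu, Hv, !vcomp_idr in Hc; exact Hc.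
Qed.

Lemma has_bdry_vinverse (s s' : Sq D) X Y a b :
  has_bdry s (vid X) a b (vid Y) -> bot s = top s' -> bot s' = top s ->
  sq_vcomp s s' = sq_vid (top s) -> has_bdry s' (vid X) b a (vid Y).
Proof.
  intros Hs Hss' Hs's Hinv.
  assert (Hl := sq_vcomp_lft D s s' Hss'). assert (Hr := sq_vcomp_rgt D s s' Hss').
  destruct Hs as (Ls & Ts & Bs & Rs).
  assert (HX : vs (lft s') = X)
    by (rewrite <- sq_corner_tl, <- Hss', sq_corner_bl, Ls; apply vid_tgt).
  assert (HY : vs (rgt s') = Y)
    by (rewrite <- sq_corner_tr, <- Hss', sq_corner_br, Rs; apply vid_tgt).
  rewrite Hinv, sq_vid_lft, Ls, <- HX, vcomp_idl, sq_corner_tl, Ls, vid_src in Hl.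
  rewrite Hinv, sq_vid_rgt, Rs, <- HY, vcomp_idl, sq_corner_tr, Rs, vid_src in Hr.
  unfold has_bdry; repeat split; congruence.
Qed.

Lemma vcomp_vinverse_cancel (b s s' : Sq D) :
  bot b = top s -> bot s = top s' -> sq_vcomp s s' = sq_vid (top s) ->
  sq_vcomp (sq_vcomp b s) s' = b.
Proof.
  intros Hbs Hss' Hinv.
  rewrite sq_vcomp_assoc, Hinv, <- Hbs by assumption.
  apply sq_vcomp_idr.
Qed.

End Boundaries.

Section LiftingSquares.
Variables D E : DoubleCat.
Variable F : DoubleFunctor D E.

Lemma has_bdry_vid_image (a : HM D) :
  has_bdry (sq_vid (FH F a)) (vid (FO F (hs a))) (FH F a) (FH F a) (vid (FO F (ht a))).
Proof. rewrite <- FH_src, <- FH_tgt; apply has_bdry_vid. Qed.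

Hypothesis Hhb3 : hb3 D E F.

Lemma hb3_vid_unique (a : HM D) (s : Sq D) :
  has_bdry s (vid (hs a)) a a (vid (ht a)) -> FS F s = sq_vid (FH F a) -> s = sq_vid a.
Proof.
  intros Hs Fs.
  destruct (Hhb3 a a eq_refl eq_refl (sq_vid (FH F a)) (has_bdry_vid_image a))
    as [x [_ Hx]].
  transitivity x; [symmetry |]; apply Hx; split; auto using has_bdry_vid, FS_vid.
Qed.

Hypothesis Hvb3 : vb3 D E F.

Lemma FS_faithful_on_boundary (u u' : VM D) (a c : HM D) (a1 a2 : Sq D) :
  has_bdry a1 u a c u' -> has_bdry a2 u a c u' -> FS F a1 = FS F a2 -> a1 = a2.
Proof.
  intros B1 B2 Heq.
  destruct (has_bdry_corners _ _ _ _ _ _ B1) as (Ha & Ha' & Hc & Hc').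
  destruct B1 as (L1 & T1 & Bo1 & R1). destruct B2 as (L2 & T2 & Bo2 & R2).
  assert (Htau0 : has_bdry (sq_vid (FH F a)) (vid (FO F (vs u)))
                    (FH F (top a1)) (FH F (top a2)) (vid (FO F (vs u'))))
    by (rewrite T1, T2, <- Ha, <- Ha'; apply has_bdry_vid_image).
  assert (Htau1 : has_bdry (sq_vid (FH F c)) (vid (FO F (vt u)))
                    (FH F (bot a1)) (FH F (bot a2)) (vid (FO F (vt u'))))
    by (rewrite Bo1, Bo2, <- Hc, <- Hc'; apply has_bdry_vid_image).
  assert (Hsquare : sq_vcomp (sq_vid (FH F a)) (FS F a2)
                    = sq_vcomp (FS F a1) (sq_vid (FH F c))).
  { rewrite <- Heq, <- T1, <- Bo1, <- FS_top, <- FS_bot.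
    rewrite sq_vcomp_idl, sq_vcomp_idr; reflexivity. }
  destruct (Hvb3 u u' a1 a2 _ _ L1 R1 L2 R2 Htau0 Htau1 Hsquare)
    as [[s0 s1] [(S0 & S1 & F0 & F1 & Hs) _]].
  simpl in *.
  rewrite T1, T2, <- Ha, <- Ha' in S0. rewrite Bo1, Bo2, <- Hc, <- Hc' in S1.
  rewrite (hb3_vid_unique a s0 S0 F0), (hb3_vid_unique c s1 S1 F1) in Hs.
  rewrite <- T2, <- Bo1, sq_vcomp_idl, sq_vcomp_idr in Hs.
  symmetry; exact Hs.
Qed.

End LiftingSquares.

Section Existence.
Variables D E : DoubleCat.
Variable F : DoubleFunctor D E.
Hypothesis Hhb3 : hb3 D E F.
Hypothesis Hvb2 : vb2 D E F.

Lemma FS_lift_exists (u u' : VM D) (a c : HM D) (beta : Sq E) :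
  hs a = vs u -> ht a = vs u' -> hs c = vt u -> ht c = vt u' ->
  has_bdry beta (FV F u) (FH F a) (FH F c) (FV F u') ->
  exists alpha : Sq D, has_bdry alpha u a c u' /\ FS F alpha = beta.
Proof.
  intros Ha Ha' Hc Hc' Bbeta.
  destruct Bbeta as (Lb & Tb & Bb & Rb).
  destruct (Hvb2 u u' beta Lb Rb)
    as (alpha0 & psi0 & psi1 & L0 & R0 & _ & [psi1' (H11' & H1'1 & Hinv & _)]
        & Bpsi0 & Bpsi1 & Hsquare).
  remember (top alpha0) as a0 eqn:Ea0. remember (bot alpha0) as c0 eqn:Ec0.
  assert (Balpha0 : has_bdry alpha0 u a0 c0 u') by (repeat split; auto).
  destruct (has_bdry_corners _ _ _ _ _ _ Balpha0) as (Ha0 & Ha0' & Hc0 & Hc0').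
  rewrite Tb in Bpsi0. rewrite Bb in Bpsi1.
  (* lift ψ0 : (e ^Fa_Fa0 e) and ψ1⁻¹ : (e ^Fc0_Fc e) along (hb3) *)
  destruct (Hhb3 a a0 (eq_trans Ha0 (eq_sym Ha)) (eq_trans Ha0' (eq_sym Ha')) psi0)
    as [sigma0 [[Bsigma0 Fsigma0] _]].
  { rewrite Ha, Ha'; exact Bpsi0. }
  assert (Bpsi1' := has_bdry_vinverse _ _ _ _ _ _ _ Bpsi1 H11' H1'1 Hinv).
  destruct (Hhb3 c0 c (eq_trans Hc (eq_sym Hc0)) (eq_trans Hc' (eq_sym Hc0')) psi1')
    as [sigma1 [[Bsigma1 Fsigma1] _]].
  { rewrite Hc0, Hc0'; exact Bpsi1'. }
  exists (sq_vcomp sigma0 (sq_vcomp alpha0 sigma1)); split.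
  - eapply has_bdry_globular_top; [exact Bsigma0 |].
    eapply has_bdry_globular_bot; [exact Balpha0 | exact Bsigma1].
  - destruct Bsigma0 as (_ & _ & Bo0 & _). destruct Bsigma1 as (_ & To1 & _ & _).
    destruct Bpsi0 as (_ & _ & Bp0 & _). destruct Bpsi1 as (_ & Tp1 & _ & _).
    destruct Bpsi1' as (_ & Tq1 & _ & _).
    assert (Hmid : bot alpha0 = top sigma1) by congruence.
    rewrite FS_vcomp by (rewrite sq_vcomp_top by exact Hmid; congruence).
    rewrite FS_vcomp, Fsigma0, Fsigma1 by assumption.
    rewrite <- sq_vcomp_assoc by (rewrite ?FS_top, ?FS_bot; congruence).
    rewrite Hsquare.
    apply vcomp_vinverse_cancel; congruence.
Qed.

End Existence.

Theorem lemma5p3 (D E : DoubleCat) (F : DoubleFunctor D E) :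
  hb3 D E F -> vb2 D E F -> vb3 D E F ->
  forall (u u' : VM D) (a c : HM D),
    hs a = vs u -> ht a = vs u' -> hs c = vt u -> ht c = vt u' ->
    forall beta : Sq E,
      has_bdry beta (FV F u) (FH F a) (FH F c) (FV F u') ->
      exists! alpha : Sq D, has_bdry alpha u a c u' /\ FS F alpha = beta.
Proof.
  intros Hhb3 Hvb2 Hvb3 u u' a c Ha Ha' Hc Hc' beta Bbeta.
  destruct (FS_lift_exists D E F Hhb3 Hvb2 u u' a c beta Ha Ha' Hc Hc' Bbeta)
    as [alpha [Balpha Falpha]].
  exists alpha; split; [split; assumption |].
  intros alpha' [Balpha' Falpha'].
  apply (FS_faithful_on_boundary D E F Hhb3 Hvb3 u u' a c alpha alpha' Balpha Balpha').
  congruence.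
Qed.
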